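(* Let $(\mathcal G,\lambda)$ be a small morphism-colored groupoid satisfying the inverse-compatibility condition. If $g,f_1,f_2\in\mathrm{Mor}(\mathcal G)$, with $(f_1,f_2)$ composable, satisfy $(s_1\circ\lambda_1)(g)=(s_1\circ\lambda_1)(f_1\circ f_2)$, then there exist composable $g_1,g_2\in\mathrm{Mor}(\mathcal G)$ with $g=g_1\circ g_2$, $(s_1\circ\lambda_1)(g_1)=(s_1\circ\lambda_1)(f_1)$ and $(s_1\circ\lambda_1)(g_2)=(s_1\circ\lambda_1)(f_2)$. In other words, $(\mathcal G,s_1\circ\lambda_1)$ is a morphism-colored category.
   Context: A morphism-colored category is a pair $(\mathcal C,\lambda)$ where $\mathcal C$ is a category and $\lambda$ assigns to each morphism $f$ a color $\lambda(f)$, such that: whenever $g,f_1,f_2$ with $(f_1,f_2)$ composable satisfy $\lambda(g)=\lambda(f_1\circ f_2)$, there exist composable $g_1,g_2$ with $g=g_1\circ g_2$, $\lambda(g_1)=\lambda(f_1)$, $\lambda(g_2)=\lambda(f_2)$. It is a morphism-colored groupoid if $\mathcal C$ is a groupoid, and small if $\mathcal C$ is small and $\lambda$ is a map into a set. Inverse-compatibility: $\lambda(f)=\lambda(g)$ implies $\lambda(f^{-1})=\lambda(g^{-1})$. $I_1=\lambda(\mathrm{Mor}(\mathcal G))$, $\lambda_1:\mathrm{Mor}(\mathcal G)\to I_1$ the corestriction of $\lambda$. The equivalence relation $\overset{1}{\sim}$ on $I_1$: $\lambda(f_1\circ\cdots\circ f_l)\overset{1}{\sim}\lambda(g_1\circ\cdots\circ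 g_l)$ for every $l\ge1$ and all composable sequences $(f_1,\dots,f_l)$, $(g_1,\dots,g_l)$ with $\lambda(f_i)=\lambda(g_i)$ for all $i$ (no other pairs). $s_1:I_1\to\bar I_1$ is the quotient map onto the set $\bar I_1$ of equivalence classes. *)

From Stdlib Require Import List Relations.
Import ListNotations.

Record Groupoid := {
  Ob : Type;
  Mor : Type;
  dom : Mor -> Ob;
  cod : Mor -> Ob;
  comp : Mor -> Mor -> Mor;           (* comp f g = f o g, defined when dom f = cod g *)
  idm : Ob -> Mor;
  inv : Mor -> Mor;
  dom_comp : forall f g, dom f = cod g -> dom (comp f g) = dom g;
  cod_comp : forall f g, dom f = cod g -> cod (comp f g) = cod f;
  dom_idm : forall a, dom (idm a) = a;
  cod_idm : forall a, cod (idm a) = a;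
  comp_assoc : forall f g h, dom f = cod g -> dom g = cod h ->
      comp f (comp g h) = comp (comp f g) h;
  comp_idl : forall f, comp (idm (cod f)) f = f;
  comp_idr : forall f, comp f (idm (dom f)) = f;
  dom_inv : forall f, dom (inv f) = cod f;
  cod_inv : forall f, cod (inv f) = dom f;
  inv_l : forall f, comp (inv f) f = idm (dom f);
  inv_r : forall f, comp f (inv f) = idm (cod f)
}.

Arguments dom {_}. Arguments cod {_}. Arguments comp {_}.
Arguments idm {_}. Arguments inv {_}.

Definition morphism_colored (G : Groupoid) {I : Type} (lam : Mor G -> I) : Prop :=
  forall g f1 f2 : Mor G, dom f1 = cod f2 -> lam g = lam (comp f1 f2) ->
    exists g1 g2 : Mor G, dom g1 = cod g2 /\ g = comp g1 g2 /\
      lam g1 = lam f1 /\ lam g2 = lam f2.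

Definition inverse_compatible (G : Groupoid) {I : Type} (lam : Mor G -> I) : Prop :=
  forall f g : Mor G, lam f = lam g -> lam (inv f) = lam (inv g).

Fixpoint chain_ok {G : Groupoid} (f : Mor G) (fs : list (Mor G)) : Prop :=
  match fs with
  | [] => True
  | g :: gs => dom f = cod g /\ chain_ok g gs
  end.

Fixpoint comp_chain {G : Groupoid} (f : Mor G) (fs : list (Mor G)) : Mor G :=
  match fs with
  | [] => f
  | g :: gs => comp f (comp_chain g gs)
  end.

Definition rel1 (G : Groupoid) {I : Type} (lam : Mor G -> I) (c d : I) : Prop :=
  exists (f : Mor G) (fs : list (Mor G)) (g : Mor G) (gs : list (Mor G)),
    chain_ok f fs /\ chain_ok g gs /\
    lam f = lam g /\ Forall2 (fun a b => lam a = lam b) fs gs /\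
    c = lam (comp_chain f fs) /\ d = lam (comp_chain g gs).

(* The equivalence relation ~1.  The paper asserts that the pairs above are
   already all pairs of an equivalence relation; to make the quotient map s_1
   well defined regardless, we take the equivalence closure of rel1 (which is
   rel1 itself whenever rel1 is an equivalence). *)
Definition sim1 (G : Groupoid) {I : Type} (lam : Mor G -> I) : I -> I -> Prop :=
  clos_refl_sym_trans I (rel1 G lam).

(* s_1 : I_1 -> bar I_1, sending a color to its ~1-equivalence class
   (represented as the subset of I it determines). *)
Definition s1 (G : Groupoid) {I : Type} (lam : Mor G -> I) (c : I) : I -> Prop :=
  fun d => sim1 G lam c d.

Definition s1lam (G : Groupoid) {I : Type} (lam : Mor G -> I) (f : Mor G) : I -> Prop :=
  s1 G lam (lam f).

(* Call two morphisms chain-equivalent when they are composites of composable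
   chains of the same length with factorwise equal colors; [~1] is generated by
   the colors of chain-equivalent pairs.  Refactoring along chains shows that
   chain-equivalence depends only on colors.  If [a] is chain-equivalent to
   [f1 o f2], the last factors of the two chains have equal colors and the
   domains of [a] and [f2]; refactoring the last factor of [a] against
   [(lb o f2^-1) o f2] yields [x] with the color of [f2] and [dom x = dom a].
   Then [a = (a o x^-1) o x], and appending [x^-1] and [f2^-1] (equal colors by
   inverse compatibility) to the two chains makes [a o x^-1] chain-equivalent
   to [f1].  Following a [~1]-path step by step transfers the splitting of
   [f1 o f2] to any [g] with [g ~1 f1 o f2]. *)
From Stdlib Require Import List Relations FunctionalExtensionality PropExtensionality.
Import ListNotations.

Section ChainEquivalence.

Variable G : Groupoid.

Lemma comp_invK (a b : Mor G) : dom a = cod b -> comp (comp a b) (inv b) = a.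
Proof.
  intros Hab. rewrite <- (comp_assoc G) by (rewrite ?cod_inv; auto).
  rewrite inv_r, <- Hab. apply comp_idr.
Qed.

Lemma comp_invKV (a b : Mor G) : dom a = dom b -> comp (comp a (inv b)) b = a.
Proof.
  intros Hab. rewrite <- (comp_assoc G) by (rewrite ?cod_inv, ?dom_inv; auto).
  rewrite inv_l, <- Hab. apply comp_idr.
Qed.

Lemma dom_comp_inv (a b : Mor G) : dom a = dom b -> dom (comp a (inv b)) = cod b.
Proof. intros Hab. rewrite dom_comp, dom_inv; rewrite ?cod_inv; auto. Qed.

Fixpoint chain_last (f : Mor G) (fs : list (Mor G)) : Mor G :=
  match fs with [] => f | g :: gs => chain_last g gs end.

Lemma cod_comp_chain (fs : list (Mor G)) (f : Mor G) :
  chain_ok f fs -> cod (comp_chain f fs) = cod f.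
Proof.
  revert f; induction fs as [|h hs IH]; intros f Hc; simpl; [reflexivity|].
  destruct Hc as [Hfh Hc]. apply cod_comp. rewrite IH; auto.
Qed.

Lemma dom_comp_chain (fs : list (Mor G)) (f : Mor G) :
  chain_ok f fs -> dom (comp_chain f fs) = dom (chain_last f fs).
Proof.
  revert f; induction fs as [|h hs IH]; intros f Hc; simpl; [reflexivity|].
  destruct Hc as [Hfh Hc]. rewrite dom_comp by (rewrite cod_comp_chain; auto).
  apply IH; auto.
Qed.

Lemma chain_ok_app (fs fs' : list (Mor G)) (f f' : Mor G) :
  chain_ok f fs -> chain_ok f' fs' -> dom (chain_last f fs) = cod f' ->
  chain_ok f (fs ++ f' :: fs').
Proof.
  revert f; induction fs as [|h hs IH]; intros f Hc Hc' Hd; simpl in *; [tauto|].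
  destruct Hc; split; auto.
Qed.

Lemma comp_chain_app (fs fs' : list (Mor G)) (f f' : Mor G) :
  chain_ok f fs -> chain_ok f' fs' -> dom (chain_last f fs) = cod f' ->
  comp_chain f (fs ++ f' :: fs') = comp (comp_chain f fs) (comp_chain f' fs').
Proof.
  revert f; induction fs as [|h hs IH]; intros f Hc Hc' Hd; simpl in *; [reflexivity|].
  destruct Hc as [Hfh Hc]. rewrite IH by auto.
  apply comp_assoc; rewrite ?dom_comp_chain, cod_comp_chain; auto.
Qed.

Variables (I : Type) (lam : Mor G -> I).

Lemma Forall2_color_map (fs hs : list (Mor G)) :
  Forall2 (fun a b => lam a = lam b) fs hs <-> map lam fs = map lam hs.
Proof.
  revert hs; induction fs as [|f fs IH]; intros [|h hs]; simpl;
    split; intros H; inversion H; subst; auto.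
  - f_equal; [auto | apply IH; auto].
  - constructor; [auto | apply IH; auto].
Qed.

Lemma color_chain_last (f h : Mor G) (fs hs : list (Mor G)) :
  map lam (f :: fs) = map lam (h :: hs) -> lam (chain_last f fs) = lam (chain_last h hs).
Proof.
  revert f h hs; induction fs as [|f' fs IH]; intros f h [|h' hs] Hm;
    inversion Hm; simpl; auto.
  apply IH; simpl; congruence.
Qed.

Definition chain_equiv (a b : Mor G) : Prop :=
  exists (f : Mor G) (fs : list (Mor G)) (h : Mor G) (hs : list (Mor G)),
    chain_ok f fs /\ chain_ok h hs /\ map lam (f :: fs) = map lam (h :: hs) /\
    a = comp_chain f fs /\ b = comp_chain h hs.

Lemma chain_equiv_of_color (a b : Mor G) : lam a = lam b -> chain_equiv a b.
Proof. intros Hab. exists a, [], b, []. simpl; rewrite Hab; auto. Qed.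

Lemma chain_equiv_sym (a b : Mor G) : chain_equiv a b -> chain_equiv b a.
Proof.
  intros (f & fs & h & hs & Hf & Hh & Hm & -> & ->). exists h, hs, f, fs; auto.
Qed.

Lemma rel1_chain_equiv (c d : I) :
  rel1 G lam c d <-> exists a b, chain_equiv a b /\ c = lam a /\ d = lam b.
Proof.
  split.
  - intros (f & fs & h & hs & Hf & Hh & Hfh & Hm & -> & ->).
    exists (comp_chain f fs), (comp_chain h hs). split; auto.
    exists f, fs, h, hs. simpl; rewrite Hfh, (proj1 (Forall2_color_map fs hs) Hm); auto.
  - intros (a & b & (f & fs & h & hs & Hf & Hh & Hm & -> & ->) & -> & ->).
    injection Hm; intros Hms Hfh.
    exists f, fs, h, hs. repeat split; auto. apply Forall2_color_map; auto.
Qed.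

Lemma chain_equiv_comp (a b a' b' : Mor G) :
  chain_equiv a b -> chain_equiv a' b' -> dom a = cod a' -> dom b = cod b' ->
  chain_equiv (comp a a') (comp b b').
Proof.
  intros (f & fs & h & hs & Hf & Hh & Hm & -> & ->)
         (f' & fs' & h' & hs' & Hf' & Hh' & Hm' & -> & ->) Ha Hb.
  rewrite dom_comp_chain, cod_comp_chain in Ha, Hb by auto.
  exists f, (fs ++ f' :: fs'), h, (hs ++ h' :: hs').
  rewrite !comp_chain_app by auto.
  repeat split; auto using chain_ok_app.
  simpl in *. rewrite !map_app. injection Hm; intros -> ->. simpl. rewrite Hm'. auto.
Qed.

Lemma chain_equiv_last (a b : Mor G) : chain_equiv a b ->
  exists la lb, lam la = lam lb /\ dom la = dom a /\ dom lb = dom b.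
Proof.
  intros (f & fs & h & hs & Hf & Hh & Hm & -> & ->).
  exists (chain_last f fs), (chain_last h hs).
  rewrite !dom_comp_chain by auto. split; auto. apply color_chain_last; auto.
Qed.

Hypothesis Hmc : morphism_colored G lam.

Lemma morphism_colored_chain (fs : list (Mor G)) (f g : Mor G) :
  chain_ok f fs -> lam g = lam (comp_chain f fs) ->
  exists g' gs, chain_ok g' gs /\ map lam (g' :: gs) = map lam (f :: fs) /\
    g = comp_chain g' gs.
Proof.
  revert f g; induction fs as [|h hs IH]; intros f g Hc Hg; simpl in *.
  - exists g, []. simpl; rewrite Hg; auto.
  - destruct Hc as [Hfh Hc].
    destruct (Hmc g f (comp_chain h hs)) as (u & v & Huv & -> & Hu & Hv);
      [rewrite cod_comp_chain; auto | auto |].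
    destruct (IH h v Hc Hv) as (v' & vs & Hc' & Hm & ->).
    exists u, (v' :: vs). simpl in *. rewrite Hu, Hm.
    rewrite cod_comp_chain in Huv by auto. auto.
Qed.

Lemma chain_equiv_color_l (a a' b : Mor G) :
  lam a' = lam a -> chain_equiv a b -> chain_equiv a' b.
Proof.
  intros Ha (f & fs & h & hs & Hf & Hh & Hm & -> & ->).
  destruct (morphism_colored_chain fs f a' Hf Ha) as (g & gs & Hg & Hm' & ->).
  exists g, gs, h, hs. rewrite Hm'. auto.
Qed.

Lemma chain_equiv_color (a a' b b' : Mor G) :
  lam a' = lam a -> lam b' = lam b -> chain_equiv a b -> chain_equiv a' b'.
Proof.
  intros Ha Hb Hab. apply (chain_equiv_color_l a); auto.
  apply chain_equiv_sym, (chain_equiv_color_l b); auto. apply chain_equiv_sym; auto.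
Qed.

Hypothesis Hinv : inverse_compatible G lam.

Lemma chain_equiv_split (a f1 f2 : Mor G) :
  dom f1 = cod f2 -> chain_equiv a (comp f1 f2) ->
  exists g1 g2, dom g1 = cod g2 /\ a = comp g1 g2 /\
    chain_equiv g1 f1 /\ lam g2 = lam f2.
Proof.
  intros Hf Ha.
  destruct (chain_equiv_last a (comp f1 f2) Ha) as (la & lb & Hl & Hla & Hlb).
  rewrite dom_comp in Hlb by auto.
  destruct (Hmc la (comp lb (inv f2)) f2) as (u & x & Hux & Hlau & Hu & Hx).
  { rewrite dom_comp_inv; auto. }
  { rewrite comp_invKV; auto. }
  assert (Hxa : dom x = dom a).
  { rewrite <- Hla, Hlau, dom_comp; auto. }
  exists (comp a (inv x)), x. repeat split; auto.
  - rewrite dom_comp_inv; auto.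
  - rewrite comp_invKV; auto.
  - rewrite <- (comp_invK f1 f2) by auto.
    apply chain_equiv_comp; auto.
    + apply chain_equiv_of_color, Hinv; auto.
    + rewrite cod_inv; auto.
    + rewrite dom_comp, cod_inv; auto.
Qed.

Definition transfers_splittings (c d : I) : Prop :=
  forall g f1 f2, dom f1 = cod f2 -> lam g = c -> lam (comp f1 f2) = d ->
  exists g1 g2, dom g1 = cod g2 /\ g = comp g1 g2 /\
    sim1 G lam (lam g1) (lam f1) /\ sim1 G lam (lam g2) (lam f2).

Lemma transfers_splittings_refl (c : I) : transfers_splittings c c.
Proof.
  intros g f1 f2 Hf Hg Hc.
  destruct (Hmc g f1 f2) as (g1 & g2 & Hd & Heq & H1 & H2); [auto | congruence |].
  exists g1, g2. rewrite H1, H2. repeat split; auto; apply rst_refl.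
Qed.

Lemma transfers_splittings_step (c d e : I) :
  (exists a b, chain_equiv a b /\ c = lam a /\ d = lam b) ->
  transfers_splittings d e -> transfers_splittings c e.
Proof.
  intros (a & b & Hab & -> & ->) Hde g f1 f2 Hf Hg He.
  destruct (Hde b f1 f2 Hf eq_refl He) as (h1 & h2 & Hh & -> & Hh1 & Hh2).
  destruct (chain_equiv_split g h1 h2) as (g1 & g2 & Hd & -> & Hg1 & Hg2); auto.
  { apply (chain_equiv_color a g (comp h1 h2) (comp h1 h2)); auto. }
  exists g1, g2. rewrite Hg2. repeat split; auto.
  apply rst_trans with (lam h1); auto.
  apply rst_step, rel1_chain_equiv. eauto.
Qed.

Lemma transfers_splittings_sim1 (c d : I) : sim1 G lam c d -> transfers_splittings c d.
Proof.
  intros Hcd. apply clos_rst_rst1n in Hcd.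
  induction Hcd as [c | c d e Hcd _ IH].
  - apply transfers_splittings_refl.
  - apply (transfers_splittings_step c d); auto.
    destruct Hcd as [Hcd | Hcd]; apply rel1_chain_equiv in Hcd
      as (a & b & Hab & -> & ->).
    + exists a, b; auto.
    + exists b, a; auto using chain_equiv_sym.
Qed.

End ChainEquivalence.

Lemma s1_eqP (G : Groupoid) (I : Type) (lam : Mor G -> I) (c d : I) :
  s1 G lam c = s1 G lam d <-> sim1 G lam c d.
Proof.
  split.
  - intros Hcd. change (s1 G lam c d). rewrite Hcd. apply rst_refl.
  - intros Hcd. apply functional_extensionality; intros e.
    apply propositional_extensionality.
    split; intros H; eapply rst_trans; eauto using rst_sym.
Qed.

Theorem mainTheorem6 (G : Groupoid) (I : Type) (lam : Mor G -> I)
  (Hmc : morphism_colored G lam) (Hinv : inverse_compatible G lam) :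
  morphism_colored G (s1lam G lam).
Proof.
  intros g f1 f2 Hf Hg. unfold s1lam in *.
  apply s1_eqP, transfers_splittings_sim1 in Hg; auto.
  destruct (Hg g f1 f2 Hf eq_refl eq_refl) as (g1 & g2 & Hd & -> & H1 & H2).
  exists g1, g2. rewrite !s1_eqP. auto.
Qed.
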